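(* Let $\Omega=\{\omega_1,\dots,\omega_n\}$ be a finite set of bids, let $u:\Omega\to[0,1]$ be a utility function, let $a:\Omega\to[0,1]$ be a (static) acceptance-probability function, let $\mathit{rv}$ be a real number (the reservation value), and let $D\le n$ be a positive integer (the deadline). For a finite sequence $\pi=(x_1,\dots,x_k)$ of elements of $\Omega$, writing $u_i=u(x_i)$ and $a_i=a(x_i)$, define $$EU_{\mathit{rv}}(\pi)=\sum_{i=1}^{k} u_i\, a_i\prod_{j=1}^{i-1}(1-a_j)+\mathit{rv}\cdot\prod_{j=1}^{k}(1-a_j).$$ Consider the algorithm MIA-RVelous: for $k=1,\dots,D$ in turn, choose $$x_k\in\operatorname{argmax}_{\omega\in\Omega\setminus\{x_1,\dots,x_{k-1}\}} EU_{\mathit{rv}}\big(\mathrm{sort}(\{x_1,\dots,x_{k-1},\omega\})\big),$$ and finally output $\pi^*=\mathrm{sort}(\{x_1,\dots,x_D\})$, where $\mathrm{sort}(S)$ denotes the sequence of the elements of a set $S\subseteq\Omega$ arranged in order of decreasing utility $u$. Then the output $\pi^*$ is an optimal bid sequence, i.e. $$\pi^*\in\operatorname{argmax}_{\pi\in\Omega^{D}} EU_{\mathit{rv}}(\pi).$$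
   Context: Setting: bilateral negotiation under the alternating offers protocol, from the perspective of one agent who plans a whole sequence of bids $\pi=(x_1,\dots,x_k)$ in advance. Each bid $x_i$ is accepted by the opponent with probability $a(x_i)$, independently of time (static acceptance model); if accepted the agent receives utility $u(x_i)$, and if all bids are rejected by the deadline $D$ the agent receives the reservation value $\mathit{rv}$. $EU_{\mathit{rv}}(\pi)$ is the resulting expected utility. $\Omega^D$ is the set of all sequences of length $D$ of elements of $\Omega$. *)

From HB Require Import structures.
From mathcomp Require Import all_boot all_order all_algebra.
Set Implicit Arguments. Unset Strict Implicit. Unset Printing Implicit Defensive.
Import Order.TTheory GRing.Theory Num.Theory.
Local Open Scope ring_scope.

Definition EU (R : realFieldType) (T : Type) (u a : T -> R) (rv : R) (pi : seq T) : R :=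
  let us := map u pi in
  let as_ := map a pi in
  \sum_(i < size pi) (nth 0 us i * nth 0 as_ i * \prod_(j < i) (1 - nth 0 as_ j))
  + rv * \prod_(j < size pi) (1 - nth 0 as_ j).

Definition usort (R : realFieldType) (T : Type) (u : T -> R) (s : seq T) : seq T :=
  sort (fun x y => u y <= u x) s.

From HB Require Import structures.
From mathcomp Require Import all_boot all_order all_algebra.
From mathcomp Require Import ring lra.
Set Implicit Arguments. Unset Strict Implicit. Unset Printing Implicit Defensive.
Import Order.TTheory GRing.Theory Num.Theory.
Local Open Scope ring_scope.

(* Bidding z in front of a sequence worth x yields (1 - a z) x + a z u z, so EU is a
   composition of such affine steps.  Exchanging two adjacent bids shows that the
   utility-decreasing order is best, so only the set of bids matters.  Let bestEU L k be the
   best value of a k-subset of the utility-sorted list L; it satisfies a dynamic program on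
   whether the head z of L is used.  The heart of the proof is that optimal sets are nested:
   every optimal k-set extends by one bid to an optimal (k+1)-set.  This rests on a
   persistence property of the program: once using z is optimal at size k it stays optimal
   at size k+1.  Persistence is proved by induction on L, simultaneously for every affine
   bound x |-> q x + c with 0 <= q <= 1 lying above the identity at the largest utility,
   because conjugating such a bound by an invertible step gives another one.  Nestedness
   makes every greedy choice optimal, by induction on k. *)

(* A step is x |-> (1 - p) x + p v, bidding utility v accepted with probability p in front
   of a continuation worth x; the bounds are the affine maps x |-> q x + c. *)
Section AffineMaps.
Variable R : realFieldType.
Implicit Types q c p v t x y : R.

Lemma affine_ge_id q c t x : q <= 1 -> t <= q * t + c -> x <= t -> x <= q * x + c.
Proof. by move=> *; nra. Qed.

Lemma step_affine_comm p v q c x : 0 <= p -> v <= q * v + c ->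
  (1 - p) * (q * x + c) + p * v <= q * ((1 - p) * x + p * v) + c.
Proof.
move=> p0 vg; rewrite -subr_ge0 (_ : _ - _ = p * (q * v + c - v)); last by ring.
by rewrite mulr_ge0 ?subr_ge0.
Qed.

Lemma step_le_affine_stepE p v q c x y : p < 1 ->
  ((1 - p) * y + p * v <= q * ((1 - p) * x + p * v) + c) =
  (y <= q * x + (c - (1 - q) * p * v) / (1 - p)).
Proof.
move=> p1; have p1' : 0 < 1 - p by rewrite subr_gt0.
set d := (c - _) / _; have hd : (1 - p) * d = c - (1 - q) * p * v.
  by rewrite mulrC divfK ?gt_eqF.
rewrite -[y <= _](ler_pM2l p1') [(1 - p) * (_ + d)]mulrDr hd.
by apply/idP/idP => h; lra.
Qed.

Lemma step_fix p v : (1 - p) * v + p * v = v.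
Proof. by rewrite mulrBl mul1r subrK. Qed.

Lemma step_coef01 p : 0 <= p <= 1 -> 0 <= 1 - p <= 1.
Proof. by case/andP=> p0 p1; rewrite subr_ge0 lerBlDr lerDl p0 p1. Qed.

Lemma step_conj_ge_id p v q c : p < 1 -> v <= q * v + c ->
  v <= q * v + (c - (1 - q) * p * v) / (1 - p).
Proof. by move=> p1 vg; rewrite -step_le_affine_stepE // step_fix. Qed.

End AffineMaps.

Section ExpectedUtility.
Variables (R : realFieldType) (T : Type) (u a : T -> R) (rv : R).

Definition bid_step (z : T) (x : R) : R := (1 - a z) * x + a z * u z.

Lemma EU_nil : EU u a rv [::] = rv.
Proof. by rewrite /EU /= !big_ord0 add0r mulr1. Qed.

Lemma EU_cons z s : EU u a rv (z :: s) = bid_step z (EU u a rv s).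
Proof.
rewrite /EU /bid_step /= !big_ord_recl /= big_ord0 mulr1.
under eq_bigr => i _ do rewrite big_ord_recl /= mulrCA.
by rewrite -big_distrr /=; ring.
Qed.

Hypothesis a01 : forall z, 0 <= a z <= 1.

Lemma bid_step_mono z : {homo bid_step z : x y / x <= y}.
Proof. by move=> x y xy; rewrite lerD2r ler_wpM2l // subr_ge0; case/andP: (a01 z). Qed.

Lemma bid_step_swap x y e : u x <= u y ->
  bid_step x (bid_step y e) <= bid_step y (bid_step x e).
Proof.
move=> uxy; case/andP: (a01 x) => ax _; case/andP: (a01 y) => ay _.
rewrite -subr_ge0 in uxy; have := mulr_ge0 (mulr_ge0 ax ay) uxy.
by rewrite /bid_step; lra.
Qed.

Lemma EU_insert x s1 s2 : all (fun y => u x <= u y) s1 ->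
  bid_step x (EU u a rv (s1 ++ s2)) <= EU u a rv (s1 ++ x :: s2).
Proof.
elim: s1 => [|y s1 IH] /=; first by rewrite EU_cons.
case/andP=> xy /IH le_s; rewrite !EU_cons.
exact: le_trans (bid_step_swap _ xy) (bid_step_mono _ le_s).
Qed.

End ExpectedUtility.

Section UtilityOrder.
Variables (R : realFieldType) (T : eqType) (u a : T -> R) (rv : R).
Hypothesis a01 : forall z, 0 <= a z <= 1.

Local Notation desc := (fun x y : T => u y <= u x).
Local Notation EU := (EU u a rv).

Lemma desc_trans : transitive desc.
Proof. by move=> y x z yx zy; apply: le_trans zy yx. Qed.

Lemma desc_total : total desc.
Proof. by move=> x y; apply: le_total. Qed.

Lemma sorted_desc_cons z s :
  sorted desc (z :: s) -> sorted desc s /\ {in s, forall y, u y <= u z}.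
Proof. by rewrite /= (path_sortedE desc_trans) => /andP[/allP]. Qed.

Lemma EU_le_sorted p s : perm_eq p s -> sorted desc s -> EU p <= EU s.
Proof.
elim: p s => [|x p IH] s ps s_sorted.
  by move: ps; rewrite perm_sym => /perm_nilP ->.
have x_s : x \in s by rewrite -(perm_mem ps) mem_head.
case/splitPr: x_s ps s_sorted => s1 s2 ps s_sorted.
have {}ps : perm_eq p (s1 ++ s2).
  by rewrite -(perm_cons x) (perm_trans ps) // -cat1s perm_catCA.
rewrite sorted_pairwise ?pairwise_cat in s_sorted; last exact: desc_trans.
case/and3P: s_sorted => /allrelP s1_x s1_sorted /= /andP[/allP x_s2 s2_sorted].
have s12_sorted : sorted desc (s1 ++ s2).
  rewrite sorted_pairwise ?pairwise_cat ?s1_sorted ?s2_sorted ?andbT; last exact: desc_trans.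
  by apply/allrelP=> y z y1 z2; apply: s1_x; rewrite // inE z2 orbT.
rewrite EU_cons; apply: le_trans (bid_step_mono u a01 x (IH _ ps s12_sorted)) _.
by apply: (EU_insert rv a01); apply/allP=> y y1; apply: s1_x; rewrite ?mem_head.
Qed.

(* For k <= size L, bestEU L k is the best EU of a length-k subsequence of L; for larger k
   its value is junk. *)
Fixpoint bestEU (L : seq T) (k : nat) : R :=
  if L is z :: L' then
    if k is k'.+1 then
      if (k <= size L')%N then Num.max (bestEU L' k) (bid_step u a z (bestEU L' k'))
      else bid_step u a z (bestEU L' k')
    else rv
  else rv.

Lemma bestEU0 L : bestEU L 0 = rv.
Proof. by case: L. Qed.

Lemma bestEU_cons_max z L k : (k < size L)%N ->
  bestEU (z :: L) k.+1 = Num.max (bestEU L k.+1) (bid_step u a z (bestEU L k)).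
Proof. by move=> /= ->. Qed.

Lemma bestEU_cons_ge z L k : (k <= size L)%N -> bestEU L k <= bestEU (z :: L) k.
Proof. by case: k => [|k] kL; rewrite ?bestEU0 // bestEU_cons_max // le_max lexx. Qed.

Lemma bestEU_cons_step z L k : bid_step u a z (bestEU L k) <= bestEU (z :: L) k.+1.
Proof. by rewrite /=; case: ifP => _; rewrite ?le_max lexx ?orbT. Qed.

Lemma bestEU_cons_le z L k x : ((k < size L)%N -> bestEU L k.+1 <= x) ->
  bid_step u a z (bestEU L k) <= x -> bestEU (z :: L) k.+1 <= x.
Proof. by move=> le_x f_le /=; case: ifP => // kL; rewrite ge_max le_x. Qed.

Lemma bestEU_cons_take z L k :
  ((k < size L)%N -> bestEU L k.+1 <= bid_step u a z (bestEU L k)) ->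
  bestEU (z :: L) k.+1 = bid_step u a z (bestEU L k).
Proof.
by move=> take_z; apply/le_anti; rewrite bestEU_cons_step andbT; apply: bestEU_cons_le.
Qed.

Lemma EU_le_bestEU s L : subseq s L -> EU s <= bestEU L (size s).
Proof.
elim: L s => [|z L IH] [|x s] //=; rewrite ?EU_nil ?bestEU0 //.
case: eqP => [<- /IH le_s | _ sub].
  by rewrite EU_cons; apply: le_trans (bestEU_cons_step _ _ _); apply: bid_step_mono.
exact: le_trans (IH _ sub) (bestEU_cons_ge _ (size_subseq sub)).
Qed.

(* For q = 1 - a z and c = a z * u z this says that once bidding z first is optimal at
   length k+1 of z :: L, it stays optimal at length k+2. *)
Definition affine_bound_propagates (L : seq T) (q c : R) :=
  forall k, (k.+2 <= size L)%N ->
  bestEU L k.+1 <= q * bestEU L k + c -> bestEU L k.+2 <= q * bestEU L k.+1 + c.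

Section PropagationStep.
Variables (z : T) (L : seq T) (q c : R).
Hypotheses (q01 : 0 <= q <= 1) (z_le_g : u z <= q * u z + c).
Hypothesis IH : forall q' c' : R, 0 <= q' <= 1 -> u z <= q' * u z + c' ->
  affine_bound_propagates L q' c'.

Local Notation m := (bestEU L).
Local Notation f := (bid_step u a z).

Lemma propagates_cons_skip k : (k < size L)%N -> m k.+1 <= q * m k + c ->
  bestEU (z :: L) k.+2 <= q * bestEU (z :: L) k.+1 + c.
Proof.
move=> kL m_le; rewrite [bestEU _ k.+1]bestEU_cons_max //.
have q0 : 0 <= q by case/andP: q01.
apply: bestEU_cons_le => [kL1|].
  apply: le_trans (IH q01 z_le_g kL1 m_le) _.
  by rewrite lerD2r ler_wpM2l // le_max lexx.
apply: le_trans (bid_step_mono u a01 z m_le) _.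
have [a0 _] := andP (a01 z); apply: le_trans (step_affine_comm _ a0 z_le_g) _.
by rewrite lerD2r ler_wpM2l // le_max lexx orbT.
Qed.

Lemma propagates_cons_take k : (k.+1 < size L)%N -> m k.+1 <= f (m k) ->
  f (m k.+1) <= q * f (m k) + c ->
  bestEU (z :: L) k.+3 <= q * bestEU (z :: L) k.+2 + c.
Proof.
move=> kL take_z f_le.
have IHf : affine_bound_propagates L (1 - a z) (a z * u z).
  by apply: IH; rewrite ?step_coef01 ?step_fix.
have take_z1 : m k.+2 <= f (m k.+1) := IHf _ kL take_z.
rewrite (bestEU_cons_take (fun _ => take_z1)).
rewrite (bestEU_cons_take (fun kL2 => IHf _ kL2 take_z1)).
have [a_lt1 | a_ge1] := ltrP (a z) 1.
  (* Conjugating x |-> q x + c by the invertible step f gives another admissible bound. *)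
  move: f_le; rewrite !step_le_affine_stepE //; apply: IH kL => //.
  exact: step_conj_ge_id.
have a_eq1 : a z = 1 by case/andP: (a01 z) => _ a1; apply/le_anti; rewrite a1.
by rewrite /bid_step a_eq1 subrr !mul0r !add0r mul1r.
Qed.

End PropagationStep.

Lemma bestEU_affine_bound_propagates L t q c : sorted desc L ->
  {in L, forall y, u y <= t} -> 0 <= q <= 1 -> t <= q * t + c ->
  affine_bound_propagates L q c.
Proof.
elim: L t q c => [|z L IH] t q c L_sorted L_le_t q01 t_le_g k //.
rewrite [size _]/= ltnS => kL.
case/sorted_desc_cons: L_sorted => L_sorted L_le_z.
have z_le_g : u z <= q * u z + c.
  by case/andP: q01 => _ q1; apply: affine_ge_id t_le_g (L_le_t z (mem_head _ _)).
have IHz q' c' := IH (u z) q' c' L_sorted L_le_z.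
have skip := propagates_cons_skip q01 z_le_g IHz.
have take := propagates_cons_take q01 z_le_g IHz.
case: k kL => [|k] kL hyp.
  by apply: skip kL (le_trans (bestEU_cons_ge z kL) _); rewrite !bestEU0 in hyp *.
rewrite [bestEU _ k.+1]bestEU_cons_max ?(ltnW kL) // in hyp.
have [f_le_m | m_lt_f] := leP (bid_step u a z (bestEU L k)) (bestEU L k.+1).
  rewrite (max_idPl f_le_m) in hyp.
  exact: skip kL (le_trans (bestEU_cons_ge z kL) hyp).
rewrite (max_idPr (ltW m_lt_f)) in hyp.
exact: take kL (ltW m_lt_f) (le_trans (bestEU_cons_step _ _ _) hyp).
Qed.

Lemma bid_step_bound_propagates z L : sorted desc L -> {in L, forall y, u y <= u z} ->
  affine_bound_propagates L (1 - a z) (a z * u z).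
Proof.
by move=> L_sorted L_le_z; apply: bestEU_affine_bound_propagates L_sorted L_le_z _ _;
  rewrite ?step_coef01 ?step_fix.
Qed.

Lemma exists_notin_filter (L G : seq T) :
  (size [seq x <- L | x \in G] < size L)%N -> exists2 w, w \in L & w \notin G.
Proof.
rewrite size_filter => /ltn_eqF; rewrite -all_count => /negbT /allPn[w wL wG].
by exists w.
Qed.

Lemma filter_mem_cons_notin (L G : seq T) z :
  z \notin L -> [seq x <- L | x \in z :: G] = [seq x <- L | x \in G].
Proof.
move=> zL; apply: eq_in_filter => x xL; rewrite inE.
by case: eqP => // xz; rewrite -xz xL in zL.
Qed.

Section ExtensionStep.
Variables (z : T) (L : seq T).
Hypotheses (L_sorted : sorted desc L) (L_le_z : {in L, forall y, u y <= u z})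
  (z_notin_L : z \notin L).
Hypothesis IH : forall G k, size [seq x <- L | x \in G] = k -> (k < size L)%N ->
  EU [seq x <- L | x \in G] = bestEU L k ->
  exists2 w, w \in L & w \notin G /\ EU [seq x <- L | x \in w :: G] = bestEU L k.+1.

Local Notation m := (bestEU L).
Local Notation f := (bid_step u a z).

Lemma extend_cons_in G k : z \in G -> size [seq x <- L | x \in G] = k -> (k < size L)%N ->
  f (EU [seq x <- L | x \in G]) = bestEU (z :: L) k.+1 ->
  exists2 w, w \in z :: L & w \notin G /\
    f (EU [seq x <- L | x \in w :: G]) = bestEU (z :: L) k.+2.
Proof.
move=> zG sizeG kL opt_G.
have G_le : EU [seq x <- L | x \in G] <= m k by rewrite -sizeG EU_le_bestEU ?filter_subseq.
have f_G : f (EU [seq x <- L | x \in G]) = f (m k).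
  apply/le_anti; rewrite bid_step_mono //= opt_G; exact: bestEU_cons_step.
have take_z : m k.+1 <= f (m k) by rewrite -f_G opt_G bestEU_cons_max // le_max lexx.
have -> : bestEU (z :: L) k.+2 = f (m k.+1).
  by apply: bestEU_cons_take => kL1; apply: bid_step_bound_propagates.
have [a_lt1 | a_ge1] := ltrP (a z) 1.
  have opt_L : EU [seq x <- L | x \in G] = m k.
    by apply: mulfI (addIr _ f_G); rewrite subr_eq0 eq_sym lt_eqF.
  have [w wL [wG opt_w]] := IH sizeG kL opt_L.
  by exists w; rewrite ?inE ?wL ?orbT // opt_w.
have a_eq1 : a z = 1 by case/andP: (a01 z) => _ a1; apply/le_anti; rewrite a1.
have [w wL wG] : exists2 w, w \in L & w \notin G by apply: exists_notin_filter; rewrite sizeG.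
by exists w; rewrite ?inE ?wL ?orbT // /bid_step a_eq1 subrr !mul0r.
Qed.

Lemma extend_cons_notin G k : z \notin G -> size [seq x <- L | x \in G] = k ->
  (k <= size L)%N -> EU [seq x <- L | x \in G] = bestEU (z :: L) k ->
  exists2 w, w \in z :: L & w \notin G /\
    EU [seq x <- z :: L | x \in w :: G] = bestEU (z :: L) k.+1.
Proof.
move=> zG sizeG kL opt_G.
have opt_L : EU [seq x <- L | x \in G] = m k.
  apply/le_anti; rewrite -{1}sizeG EU_le_bestEU ?filter_subseq //= opt_G.
  exact: bestEU_cons_ge.
have ext_z : EU [seq x <- z :: L | x \in z :: G] = f (m k).
  by rewrite /= mem_head EU_cons filter_mem_cons_notin ?opt_L.
have [kL1 | Lk] := ltnP k (size L); last first.
  exists z; rewrite ?mem_head //; split=> //.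
  by rewrite ext_z bestEU_cons_take // ltnNge Lk.
have [f_le_m | m_lt_f] := leP (f (m k)) (m k.+1); last first.
  exists z; rewrite ?mem_head //; split=> //.
  by rewrite ext_z bestEU_cons_max // (max_idPr (ltW m_lt_f)).
have [w wL [wG opt_w]] := IH sizeG kL1 opt_L.
exists w; rewrite ?inE ?wL ?orbT //; split=> //.
have zw : z \notin w :: G by rewrite inE negb_or zG andbT; apply: contraNneq z_notin_L => ->.
by rewrite [X in EU X]/= (negbTE zw) opt_w bestEU_cons_max // (max_idPl f_le_m).
Qed.

End ExtensionStep.

Lemma bestEU_extend L G k : sorted desc L -> uniq L ->
  size [seq x <- L | x \in G] = k -> (k < size L)%N ->
  EU [seq x <- L | x \in G] = bestEU L k ->
  exists2 w, w \in L & w \notin G /\ EU [seq x <- L | x \in w :: G] = bestEU L k.+1.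
Proof.
elim: L G k => [|z L IH] G k //.
case/sorted_desc_cons => L_sorted L_le_z /andP[z_notin_L L_uniq].
have {}IH G' k' := IH G' k' L_sorted L_uniq.
case zG : (z \in G); rewrite [X in EU X]/= [X in size X]/= zG; last first.
  by move=> sizeG kL; apply: extend_cons_notin; rewrite ?zG.
case: k => [|k] // [sizeG] kL; rewrite EU_cons => opt_G.
have [w wL [wG opt_w]] := extend_cons_in L_sorted L_le_z IH zG sizeG kL opt_G.
by exists w => //; split=> //; rewrite [X in EU X]/= inE zG orbT EU_cons.
Qed.

Lemma EU_le_usort p : EU p <= EU (usort u p).
Proof.
apply: EU_le_sorted; last exact: sort_sorted desc_total _.
by rewrite perm_sym perm_sort.
Qed.

Lemma perm_filter_mem (L G : seq T) : uniq L -> uniq G -> {subset G <= L} ->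
  perm_eq [seq x <- L | x \in G] G.
Proof.
move=> L_uniq G_uniq GL; apply: uniq_perm; rewrite ?filter_uniq // => x.
by rewrite mem_filter andb_idr //; apply: GL.
Qed.

Section SortedSupport.
Variable L : seq T.
Hypotheses (L_sorted : sorted desc L) (L_uniq : uniq L).

Lemma EU_usort_filter G : uniq G -> {subset G <= L} ->
  EU (usort u G) = EU [seq x <- L | x \in G].
Proof.
move=> G_uniq GL; have G_perm := perm_filter_mem L_uniq G_uniq GL.
apply/le_anti/andP; split; apply: EU_le_sorted.
- by rewrite perm_sort perm_sym.
- by apply: sorted_filter => //; apply: desc_trans.
- by rewrite perm_sym perm_sort perm_sym.
- exact: sort_sorted desc_total _.
Qed.

Lemma EU_usort_le_bestEU G : uniq G -> {subset G <= L} ->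
  EU (usort u G) <= bestEU L (size G).
Proof.
move=> G_uniq GL; rewrite EU_usort_filter // -(perm_size (perm_filter_mem L_uniq G_uniq GL)).
exact/EU_le_bestEU/filter_subseq.
Qed.

Lemma greedy_usort_bestEU xs : uniq xs -> {subset xs <= L} ->
  (forall k, (k < size xs)%N -> forall w, w \in L -> w \notin take k xs ->
     EU (usort u (take k xs ++ [:: w])) <= EU (usort u (take k.+1 xs))) ->
  forall j, (j <= size xs)%N -> EU (usort u (take j xs)) = bestEU L j.
Proof.
move=> xs_uniq xsL greedy; elim=> [|j IH] j_lt; first by rewrite take0 EU_nil bestEU0.
have take_uniq' i : uniq (take i xs) by apply: take_uniq.
have takeL i : {subset take i xs <= L} by move=> x /mem_take /xsL.
have opt_G := IH (ltnW j_lt); rewrite EU_usort_filter // in opt_G.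
have size_G : size [seq x <- L | x \in take j xs] = j.
  by rewrite (perm_size (perm_filter_mem L_uniq (take_uniq' j) (takeL j))) size_takel // ltnW.
have jL : (j < size L)%N by apply: leq_trans j_lt (uniq_leq_size xs_uniq xsL).
have [w wL [wG opt_w]] := bestEU_extend L_sorted L_uniq size_G jL opt_G.
have upper := EU_usort_le_bestEU (take_uniq' j.+1) (takeL j.+1).
rewrite size_takel // in upper; apply/le_anti; rewrite upper /= -opt_w.
have -> : [seq x <- L | x \in w :: take j xs] = [seq x <- L | x \in take j xs ++ [:: w]].
  by apply: eq_filter => x; rewrite mem_cat mem_seq1 inE orbC.
rewrite -EU_usort_filter ?cat_uniq ?take_uniq' /= ?orbF ?wG ?greedy //.
by move=> x; rewrite mem_cat mem_seq1 => /orP[/takeL | /eqP ->].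
Qed.

End SortedSupport.

End UtilityOrder.

Theorem theorem1 (R : realFieldType) (T : finType) (u a : T -> R) (rv : R) (D : nat)
  (hu : forall w, 0 <= u w <= 1) (ha : forall w, 0 <= a w <= 1)
  (hD0 : (0 < D)%N) (hDn : (D <= #|T|)%N)
  (xs : seq T) (hsize : size xs = D) (huniq : uniq xs)
  (hgreedy : forall k : nat, (k < D)%N -> forall w : T, w \notin take k xs ->
     EU u a rv (usort u (take k xs ++ [:: w])) <= EU u a rv (usort u (take k.+1 xs))) :
  let pistar := usort u xs in
  [/\ size pistar = D, uniq pistar &
      forall pi : seq T, size pi = D -> uniq pi -> EU u a rv pi <= EU u a rv pistar].
Proof.
move=> pistar; set L := usort u (enum T).
have L_sorted : sorted (fun x y => u y <= u x) L by apply/sort_sorted/desc_total.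
have L_uniq : uniq L by rewrite sort_uniq enum_uniq.
have L_full x : x \in L by rewrite mem_sort mem_enum.
have opt_pistar : EU u a rv pistar = bestEU u a rv L D.
  rewrite /pistar -hsize -{1}(take_size xs) (greedy_usort_bestEU ha L_sorted) //.
  by move=> k kD w _; apply: hgreedy; rewrite -hsize.
split; rewrite ?size_sort ?sort_uniq // => pi size_pi pi_uniq.
rewrite opt_pistar -size_pi; apply: le_trans (EU_le_usort _ _ ha _) _.
exact: EU_usort_le_bestEU.
Qed.
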